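(* Suppose Assumptions 1, 2 and 3 hold, let $k>0$, and consider the distributed dynamics $$\dot{\lambda}_i=d_i-\hat{x}_i(\lambda_i)+\phi_i\big(\hat{x}_i(\lambda_i)\big)+k\sum_{j\in\mathcal{N}_i}(\lambda_j-\lambda_i),\qquad i=1,\dots,N,$$ from an arbitrary initial condition in $\mathbb{R}^N$. (a) If $\sum_{i=1}^N\big(d_i-\bar{x}_i+\phi_i(\bar{x}_i)\big)>0$, then for every $i$, $\lambda_i(t)\to+\infty$ and $\lim_{t\to\infty}\dot{\lambda}_i(t)=D_0$, where $D_0=\frac1N\sum_{i=1}^N\big(d_i-\bar{x}_i+\phi_i(\bar{x}_i)\big)>0$. (b) If $\sum_{i=1}^N\big(d_i-\underline{x}_i+\phi_i(\underline{x}_i)\big)<0$, then for every $i$, $\lambda_i(t)\to-\infty$ and $\lim_{t\to\infty}\dot{\lambda}_i(t)=D_1$, where $D_1=\frac1N\sum_{i=1}^N\big(d_i-\underline{x}_i+\phi_i(\underline{x}_i)\big)<0$.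
   Context: For $i=1,\dots,N$: $d_i\in\mathbb{R}$, $\mathcal{X}_i=[\underline{x}_i,\bar{x}_i]$ a nonempty closed interval, $f_i,\phi_i:\mathbb{R}\to\mathbb{R}$. Assumption 1: for each $i$, $f_i$ and $\phi_i$ are continuously differentiable, $f_i$ is strictly convex on $\mathcal{X}_i$, $\phi_i$ is convex on $\mathcal{X}_i$, and $\phi_i'(x_i)<1$ for all $x_i\in\mathcal{X}_i$. Assumption 2: $f_i'(x_i)>0$ for all $x_i\in\mathcal{X}_i$ and all $i$. Assumption 3: the communication graph $\mathcal{G}=(\{1,\dots,N\},\mathcal{E})$ is undirected and connected; $\mathcal{N}_i=\{j:(j,i)\in\mathcal{E}\}$. Let $v_i(x_i)=f_i'(x_i)(1-\phi_i'(x_i))^{-1}$ on $\mathcal{X}_i$ (strictly increasing). Define for $\lambda\in\mathbb{R}$: $\hat{x}_i(\lambda)=\underline{x}_i$ if $\lambda\le v_i(\underline{x}_i)$; $\hat{x}_i(\lambda)=v_i^{-1}(\lambda)$ if $v_i(\underline{x}_i)<\lambda<v_i(\bar{x}_i)$; $\hat{x}_i(\lambda)=\bar{x}_i$ if $\lambda\ge v_i(\bar{x}_i)$. *)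

From Stdlib Require Import Reals Lra List Relations ClassicalEpsilon.
Open Scope R_scope.

Definition rsum (n : nat) (g : nat -> R) : R :=
  fold_right Rplus 0 (map g (seq 0 n)).

Definition convex_on (f : R -> R) (a b : R) : Prop :=
  forall x y t, a <= x <= b -> a <= y <= b -> 0 <= t <= 1 ->
    f (t * x + (1 - t) * y) <= t * f x + (1 - t) * f y.

Definition strictly_convex_on (f : R -> R) (a b : R) : Prop :=
  forall x y t, a <= x <= b -> a <= y <= b -> x <> y -> 0 < t < 1 ->
    f (t * x + (1 - t) * y) < t * f x + (1 - t) * f y.

Definition vfun (df dphi : R -> R) (x : R) : R := df x / (1 - dphi x).

(* inverse of v on the open interval (lo,hi) (chosen by epsilon; unique since
   v is strictly increasing under the assumptions) *)
Definition vinv (v : R -> R) (lo hi lam : R) : R :=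
  epsilon (inhabits lo) (fun x => lo < x < hi /\ v x = lam).

Definition xhat (v : R -> R) (lo hi lam : R) : R :=
  if Rle_dec lam (v lo) then lo
  else if Rle_dec (v hi) lam then hi
  else vinv v lo hi lam.

Definition edge_rel (N : nat) (adj : nat -> nat -> bool) : relation nat :=
  fun a b => (a < N)%nat /\ (b < N)%nat /\ adj a b = true.

Definition connected_graph (N : nat) (adj : nat -> nat -> bool) : Prop :=
  forall i j, (i < N)%nat -> (j < N)%nat -> clos_refl_trans nat (edge_rel N adj) i j.

(* right-hand side of the dynamics for agent i; N_i = {j | adj j i} *)
Definition rhs (N : nat) (adj : nat -> nat -> bool) (k : R)
  (d lo hi : nat -> R) (phi df dphi : nat -> R -> R)
  (lam : nat -> R) (i : nat) : R :=
  let xi := xhat (vfun (df i) (dphi i)) (lo i) (hi i) (lam i) in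
  d i - xi + phi i xi
  + k * rsum N (fun j => if adj j i then lam j - lam i else 0).

(* Write g_i(l) = d_i - xhat_i(l) + phi_i(xhat_i(l)) for the drift of agent i.  Since
   x - phi_i(x) is nondecreasing on [lo_i, hi_i], g_i lies between its values c_i at xhat = hi_i
   and u_i at xhat = lo_i, and g_i(l) = c_i as soon as l >= max(v_i(lo_i), v_i(hi_i)).
   The consensus term sums to zero, so the mean of lam grows at rate at least D0 = mean c > 0.
   The disagreement V = sum_i (lam_i - mean lam)^2 satisfies V' <= -a V + B, because the graph
   Dirichlet form dominates V (a Poincare inequality, using connectedness); hence V stays
   bounded and every lam_i tends to +oo.  From then on the drifts are the constants c_i, the
   rates w_i = lam_i' obey the linear consensus dynamics w' = -k L w, and sum_i (w_i - D0)^2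
   decays exponentially.  Part (b) is part (a) applied to -lam. *)

From Stdlib Require Import Reals Lra Lia List Relations ClassicalEpsilon.
Open Scope R_scope.

(** * Finite sums and derivatives *)

Lemma fold_right_Rplus_init (l : list R) a :
  fold_right Rplus a l = fold_right Rplus 0 l + a.
Proof. induction l as [|x l IH]; simpl; [|rewrite IH]; lra. Qed.

Lemma rsum_S n g : rsum (S n) g = rsum n g + g n.
Proof.
  unfold rsum. rewrite seq_S, map_app, fold_right_app; simpl.
  rewrite fold_right_Rplus_init. lra.
Qed.

Lemma rsum_ext n f g : (forall i, (i < n)%nat -> f i = g i) -> rsum n f = rsum n g.
Proof.
  induction n as [|n IH]; intros H; [reflexivity|].
  rewrite !rsum_S, IH, H; auto; intros; apply H; lia.
Qed.

Lemma rsum_eq_0 n f : (forall i, (i < n)%nat -> f i = 0) -> rsum n f = 0.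
Proof.
  induction n as [|n IH]; intros H; [reflexivity|].
  rewrite rsum_S, IH, H; [ring | lia | intros; apply H; lia].
Qed.

Lemma rsum_plus n f g : rsum n (fun i => f i + g i) = rsum n f + rsum n g.
Proof. induction n as [|n IH]; [unfold rsum; simpl; lra|]. rewrite !rsum_S, IH. lra. Qed.

Lemma rsum_minus n f g : rsum n (fun i => f i - g i) = rsum n f - rsum n g.
Proof. induction n as [|n IH]; [unfold rsum; simpl; lra|]. rewrite !rsum_S, IH. lra. Qed.

Lemma rsum_opp n f : rsum n (fun i => - f i) = - rsum n f.
Proof. induction n as [|n IH]; [unfold rsum; simpl; lra|]. rewrite !rsum_S, IH. lra. Qed.

Lemma rsum_scal n c f : rsum n (fun i => c * f i) = c * rsum n f.
Proof. induction n as [|n IH]; [unfold rsum; simpl; lra|]. rewrite !rsum_S, IH. lra. Qed.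

Lemma rsum_const n c : rsum n (fun _ => c) = INR n * c.
Proof. induction n as [|n IH]; [unfold rsum; simpl; lra|]. rewrite rsum_S, IH, S_INR. lra. Qed.

Lemma rsum_le n f g : (forall i, (i < n)%nat -> f i <= g i) -> rsum n f <= rsum n g.
Proof.
  induction n as [|n IH]; intros H; [unfold rsum; simpl; lra|]. rewrite !rsum_S.
  assert (rsum n f <= rsum n g) by (apply IH; intros; apply H; lia).
  assert (f n <= g n) by (apply H; lia). lra.
Qed.

Lemma rsum_nonneg n f : (forall i, (i < n)%nat -> 0 <= f i) -> 0 <= rsum n f.
Proof. intros H. rewrite <- (Rmult_0_r (INR n)), <- rsum_const. now apply rsum_le. Qed.

Lemma rsum_term_le n f a :
  (forall i, (i < n)%nat -> 0 <= f i) -> (a < n)%nat -> f a <= rsum n f.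
Proof.
  induction n as [|n IH]; intros H Ha; [lia|]. rewrite rsum_S.
  destruct (Nat.eq_dec a n) as [->|Hne].
  - assert (0 <= rsum n f) by (apply rsum_nonneg; intros; apply H; lia). lra.
  - assert (f a <= rsum n f) by (apply IH; [intros; apply H|]; lia).
    assert (0 <= f n) by (apply H; lia). lra.
Qed.

Lemma rsum_swap n m F :
  rsum n (fun i => rsum m (fun j => F i j)) = rsum m (fun j => rsum n (fun i => F i j)).
Proof.
  induction n as [|n IH].
  - unfold rsum at 1; simpl. rewrite <- (Rmult_0_r (INR m)), <- rsum_const. reflexivity.
  - rewrite rsum_S, IH, <- rsum_plus. apply rsum_ext; intros. now rewrite rsum_S.
Qed.

Definition mean (N : nat) (y : nat -> R) : R := / INR N * rsum N y.

Lemma rsum_sub_mean N y : (0 < N)%nat -> rsum N (fun i => y i - mean N y) = 0.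
Proof.
  intros HN. assert (0 < INR N) by (apply lt_0_INR; lia).
  rewrite rsum_minus, rsum_const. unfold mean. field. lra.
Qed.

Lemma dpl_eq f x l l' : derivable_pt_lim f x l -> l = l' -> derivable_pt_lim f x l'.
Proof. now intros H <-. Qed.

Lemma dpl_const c x : derivable_pt_lim (fun _ => c) x 0.
Proof. apply derivable_pt_lim_const. Qed.

Lemma dpl_plus f g x a b : derivable_pt_lim f x a -> derivable_pt_lim g x b ->
  derivable_pt_lim (fun s => f s + g s) x (a + b).
Proof. apply derivable_pt_lim_plus. Qed.

Lemma dpl_minus f g x a b : derivable_pt_lim f x a -> derivable_pt_lim g x b ->
  derivable_pt_lim (fun s => f s - g s) x (a - b).
Proof. apply derivable_pt_lim_minus. Qed.

Lemma dpl_mult f g x a b : derivable_pt_lim f x a -> derivable_pt_lim g x b ->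
  derivable_pt_lim (fun s => f s * g s) x (a * g x + f x * b).
Proof. apply derivable_pt_lim_mult. Qed.

Lemma dpl_scal c f x a : derivable_pt_lim f x a -> derivable_pt_lim (fun s => c * f s) x (c * a).
Proof. intros H. apply dpl_eq with (0 * f x + c * a); [apply dpl_mult, H; apply dpl_const | ring]. Qed.

Lemma dpl_opp f x a : derivable_pt_lim f x a -> derivable_pt_lim (fun s => - f s) x (- a).
Proof. apply derivable_pt_lim_opp. Qed.

Lemma derivable_pt_lim_rsum n (F : R -> nat -> R) F' t :
  (forall i, (i < n)%nat -> derivable_pt_lim (fun s => F s i) t (F' i)) ->
  derivable_pt_lim (fun s => rsum n (F s)) t (rsum n F').
Proof.
  induction n as [|n IH]; intros H; [unfold rsum; simpl; apply dpl_const|].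
  apply derivable_pt_lim_ext with (fun s => rsum n (F s) + F s n); [intros; now rewrite rsum_S|].
  rewrite rsum_S. apply dpl_plus; [apply IH; intros; apply H|apply H]; lia.
Qed.

Lemma derivable_pt_lim_mean N (F : R -> nat -> R) F' t :
  (forall i, (i < N)%nat -> derivable_pt_lim (fun s => F s i) t (F' i)) ->
  derivable_pt_lim (fun s => mean N (F s)) t (mean N F').
Proof. intros H. apply dpl_scal, derivable_pt_lim_rsum, H. Qed.

(** * The graph Laplacian and a Poincare inequality *)

(* [consensus N adj y = - L y] and [dirichlet N adj y y = 2 y^T L y] for the graph Laplacian L. *)
Definition consensus (N : nat) (adj : nat -> nat -> bool) (y : nat -> R) (i : nat) : R :=
  rsum N (fun j => if adj j i then y j - y i else 0).

Definition dirichlet (N : nat) (adj : nat -> nat -> bool) (x y : nat -> R) : R :=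
  rsum N (fun i => rsum N (fun j => if adj j i then (x j - x i) * (y j - y i) else 0)).

Lemma consensus_opp N adj y i :
  consensus N adj (fun j => - y j) i = - consensus N adj y i.
Proof.
  unfold consensus. rewrite <- rsum_opp. apply rsum_ext; intros j _. destruct (adj j i); ring.
Qed.

Lemma derivable_pt_lim_consensus N adj (F : R -> nat -> R) F' t i :
  (forall j, (j < N)%nat -> derivable_pt_lim (fun s => F s j) t (F' j)) -> (i < N)%nat ->
  derivable_pt_lim (fun s => consensus N adj (F s) i) t (consensus N adj F' i).
Proof.
  intros H Hi. apply (derivable_pt_lim_rsum N (fun s j => if adj j i then F s j - F s i else 0)).
  intros j Hj. destruct (adj j i); [apply (dpl_minus (fun s => F s j)); auto | apply dpl_const].
Qed.

Section SymmetricGraph.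
Variables (N : nat) (adj : nat -> nat -> bool).
Hypothesis Hsym : forall i j, adj i j = adj j i.

(* Summation by parts: exchanging i and j flips the sign of every term. *)
Lemma rsum_mul_consensus x y :
  rsum N (fun i => x i * consensus N adj y i) = - / 2 * dirichlet N adj x y.
Proof.
  set (S := rsum N (fun i => rsum N (fun j => if adj j i then x i * (y j - y i) else 0))).
  assert (E1 : rsum N (fun i => x i * consensus N adj y i) = S).
  { apply rsum_ext; intros i _. unfold consensus. rewrite <- rsum_scal.
    apply rsum_ext; intros j _. destruct (adj j i); ring. }
  assert (E2 : S = rsum N (fun i => rsum N (fun j => if adj j i then - (x j * (y j - y i)) else 0))).
  { unfold S. rewrite rsum_swap. apply rsum_ext; intros i _. apply rsum_ext; intros j _.
    rewrite (Hsym i j). destruct (adj j i); ring. }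
  assert (E3 : S + S = - dirichlet N adj x y).
  { rewrite E2 at 2. unfold S, dirichlet. rewrite <- rsum_opp, <- rsum_plus.
    apply rsum_ext; intros i _. rewrite <- rsum_opp, <- rsum_plus.
    apply rsum_ext; intros j _. destruct (adj j i); ring. }
  lra.
Qed.

Lemma rsum_consensus y : rsum N (consensus N adj y) = 0.
Proof.
  transitivity (rsum N (fun i => (fun _ => 1) i * consensus N adj y i)).
  { apply rsum_ext; intros; ring. }
  rewrite rsum_mul_consensus. unfold dirichlet.
  rewrite (rsum_eq_0 N); [ring|]. intros i _.
  apply rsum_eq_0; intros j _. destruct (adj j i); ring.
Qed.

Lemma rsum_shift_mul_consensus y m :
  rsum N (fun i => (y i - m) * consensus N adj y i) = - / 2 * dirichlet N adj y y.
Proof.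
  transitivity (rsum N (fun i => y i * consensus N adj y i) - m * rsum N (consensus N adj y)).
  - rewrite <- rsum_scal, <- rsum_minus. apply rsum_ext; intros; ring.
  - rewrite rsum_consensus, rsum_mul_consensus. ring.
Qed.

End SymmetricGraph.

Lemma dirichlet_nonneg N adj y : 0 <= dirichlet N adj y y.
Proof.
  apply rsum_nonneg; intros i _. apply rsum_nonneg; intros j _.
  destruct (adj j i); [apply Rle_0_sqr | lra].
Qed.

Lemma edge_le_dirichlet N adj y a b :
  (a < N)%nat -> (b < N)%nat -> adj a b = true ->
  (y a - y b) * (y a - y b) <= dirichlet N adj y y.
Proof.
  intros Ha Hb Hab.
  set (F := fun i j => if adj j i then (y j - y i) * (y j - y i) else 0).
  assert (HF : forall i j, 0 <= F i j) by (intros i j; unfold F; destruct (adj j i); [apply Rle_0_sqr | lra]).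
  apply Rle_trans with (rsum N (F b)).
  - replace ((y a - y b) * (y a - y b)) with (F b a) by (unfold F; rewrite Hab; ring).
    apply rsum_term_le; auto.
  - apply (rsum_term_le N (fun i => rsum N (F i))); auto.
    intros; apply rsum_nonneg; auto.
Qed.

Lemma connected_sqr_diff_le_dirichlet N adj i j :
  connected_graph N adj -> (i < N)%nat -> (j < N)%nat ->
  exists C, 0 <= C /\ forall y, (y i - y j) * (y i - y j) <= C * dirichlet N adj y y.
Proof.
  intros Hc Hi Hj. pose proof (Hc i j Hi Hj) as Hij. clear Hi Hj.
  induction Hij as [a b [Ha [Hb Hab]] | a | a b c _ IH1 _ IH2].
  - exists 1. split; [lra|]. intros y. rewrite Rmult_1_l. now apply edge_le_dirichlet.
  - exists 0. split; [lra|]. intros y. pose proof (dirichlet_nonneg N adj y). nra.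
  - destruct IH1 as [C1 [H1 K1]], IH2 as [C2 [H2 K2]].
    exists (2 * (C1 + C2)). split; [lra|]. intros y.
    specialize (K1 y). specialize (K2 y). pose proof (dirichlet_nonneg N adj y).
    assert (0 <= (y a - 2 * y b + y c) * (y a - 2 * y b + y c)) by apply Rle_0_sqr.
    nra.
Qed.

Lemma exists_uniform_constant n (P : R -> nat -> Prop) :
  (forall C C' i, P C i -> C <= C' -> P C' i) ->
  (forall i, (i < n)%nat -> exists C, 0 <= C /\ P C i) ->
  exists C, 0 <= C /\ forall i, (i < n)%nat -> P C i.
Proof.
  intros Hmono. induction n as [|n IH]; intros H.
  - exists 0. split; [lra | intros; lia].
  - destruct IH as [C1 [H1 K1]]; [intros; apply H; lia|].
    destruct (H n) as [C2 [H2 K2]]; [lia|].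
    exists (C1 + C2). split; [lra|]. intros i Hi.
    destruct (Nat.eq_dec i n) as [->|Hne].
    + apply Hmono with C2; auto; lra.
    + apply Hmono with C1; [apply K1; lia | lra].
Qed.

Lemma rsum_sqr_diff_pairs N y : (0 < N)%nat ->
  rsum N (fun i => rsum N (fun j => (y i - y j) * (y i - y j))) =
  2 * INR N * rsum N (fun i => (y i - mean N y) * (y i - mean N y)).
Proof.
  intros HN. assert (0 < INR N) by (apply lt_0_INR; lia).
  set (S1 := rsum N y). set (S2 := rsum N (fun i => y i * y i)).
  transitivity (rsum N (fun i => INR N * (y i * y i) + -2 * S1 * y i + S2)).
  { apply rsum_ext; intros i _.
    transitivity (rsum N (fun j => y i * y i + -2 * y i * y j + y j * y j)).
    { apply rsum_ext; intros; ring. }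
    rewrite !rsum_plus, rsum_const, rsum_scal. fold S1 S2. ring. }
  transitivity (2 * INR N * rsum N (fun i => y i * y i + -2 * mean N y * y i + mean N y * mean N y)).
  - rewrite !rsum_plus, !rsum_scal, !rsum_const. fold S1 S2. unfold mean. fold S1. field. lra.
  - f_equal. apply rsum_ext; intros; ring.
Qed.

Lemma poincare_dirichlet N adj : (0 < N)%nat -> connected_graph N adj ->
  exists C, 0 < C /\ forall y,
    rsum N (fun i => (y i - mean N y) * (y i - mean N y)) <= C * dirichlet N adj y y.
Proof.
  intros HN Hc. assert (HNr : 0 < INR N) by (apply lt_0_INR; lia).
  assert (Hmono : forall C C' (Q : (nat -> R) -> R),
    (forall y, Q y <= C * dirichlet N adj y y) -> C <= C' ->
    forall y, Q y <= C' * dirichlet N adj y y).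
  { intros C C' Q HQ HC y. specialize (HQ y). pose proof (dirichlet_nonneg N adj y). nra. }
  destruct (exists_uniform_constant N (fun C i => forall j, (j < N)%nat -> forall y,
              (y i - y j) * (y i - y j) <= C * dirichlet N adj y y)) as [C [HC K]].
  - intros C C' i H HCC j Hj. exact (Hmono C C' (fun y => (y i - y j) * (y i - y j)) (H j Hj) HCC).
  - intros i Hi. apply (exists_uniform_constant N (fun C j => forall y,
              (y i - y j) * (y i - y j) <= C * dirichlet N adj y y)).
    + intros C C' j H HCC. now apply (Hmono C).
    + intros j Hj. now apply connected_sqr_diff_le_dirichlet.
  - exists (INR N * C / 2 + 1).
    assert (0 <= INR N * C) by (apply Rmult_le_pos; lra).
    split; [lra|]. intros y. pose proof (dirichlet_nonneg N adj y).
    assert (Hs : rsum N (fun i => rsum N (fun j => (y i - y j) * (y i - y j)))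
                 <= INR N * (INR N * (C * dirichlet N adj y y))).
    { rewrite <- !rsum_const. apply rsum_le; intros i Hi. apply rsum_le; intros j Hj. now apply K. }
    rewrite rsum_sqr_diff_pairs in Hs by exact HN.
    nra.
Qed.

(** * Linear differential inequalities *)

Lemma young_ineq e x y : 0 < e -> 2 * x * y <= e * (x * x) + / e * (y * y).
Proof.
  intros He.
  assert (E : e * (x * x) + / e * (y * y) - 2 * x * y = (e * x - y) * (e * x - y) / e) by (field; lra).
  assert (0 <= (e * x - y) * (e * x - y) / e).
  { apply Rmult_le_pos; [apply Rle_0_sqr | left; apply Rinv_0_lt_compat, He]. }
  lra.
Qed.

Lemma sqr_le_of_bounds c u x : c <= x <= u -> x * x <= c * c + u * u.
Proof.
  intros [Hc Hu]. pose proof (Rle_0_sqr c). pose proof (Rle_0_sqr u). unfold Rsqr in *.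
  destruct (Rle_dec 0 x).
  - assert (x * x <= u * u) by (apply Rmult_le_compat; lra). lra.
  - assert ((- x) * (- x) <= (- c) * (- c)) by (apply Rmult_le_compat; lra). lra.
Qed.

Lemma exp_opp_mul a x : exp (- a * x) * exp (a * x) = 1.
Proof. rewrite <- exp_plus, <- exp_0. f_equal. ring. Qed.

Lemma exp_le_1 x : x <= 0 -> exp x <= 1.
Proof.
  intros [Hx | ->]; [rewrite <- exp_0; left; now apply exp_increasing | rewrite exp_0; lra].
Qed.

Lemma derivable_pt_lim_exp_affine a b x :
  derivable_pt_lim (fun s => exp (a * (s - b))) x (a * exp (a * (x - b))).
Proof.
  apply derivable_pt_lim_ext with (comp exp (fun s => a * (s - b))); [reflexivity|].
  apply dpl_eq with (exp (a * (x - b)) * (a * (1 - 0))); [|ring].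
  apply derivable_pt_lim_comp; [|apply derivable_pt_lim_exp].
  apply dpl_scal, dpl_minus; [apply derivable_pt_lim_id | apply dpl_const].
Qed.

(* [(h s - B/a) e^{a (s - t0)}] is nonincreasing. *)
Lemma gronwall_linear (h h' : R -> R) t0 a B : 0 < a ->
  (forall t, t0 <= t -> derivable_pt_lim h t (h' t)) ->
  (forall t, t0 <= t -> h' t <= - a * h t + B) ->
  forall t, t0 <= t -> h t <= B / a + Rabs (h t0 - B / a) * exp (- a * (t - t0)).
Proof.
  intros Ha Hd Hle t Ht.
  set (W := fun s => (h s - B / a) * exp (a * (s - t0))).
  assert (HW : W t <= W t0).
  { destruct (Req_dec t t0) as [->|Hne]; [lra|].
    destruct (MVT_cor2 W (fun s => (h' s + a * h s - B) * exp (a * (s - t0))) t0 t)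
      as [s [Hs Hst]]; [lra| |].
    - intros s Hs. unfold W. eapply dpl_eq.
      + apply dpl_mult; [apply dpl_minus; [apply Hd; lra | apply dpl_const]
                        | apply derivable_pt_lim_exp_affine].
      + cbv beta. field. lra.
    - cbv beta in Hst. pose proof (Hle s ltac:(lra)). pose proof (exp_pos (a * (s - t0))).
      assert ((h' s + a * h s - B) * exp (a * (s - t0)) <= 0) by nra.
      assert (0 < t - t0) by lra. nra. }
  unfold W in HW. replace (t0 - t0) with 0 in HW by ring.
  rewrite Rmult_0_r, exp_0, Rmult_1_r in HW.
  pose proof (exp_opp_mul a (t - t0)) as Hinv. pose proof (exp_pos (- a * (t - t0))).
  pose proof (Rle_abs (h t0 - B / a)).
  assert (h t - B / a <= (h t0 - B / a) * exp (- a * (t - t0))).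
  { replace (h t - B / a)
      with ((h t - B / a) * exp (a * (t - t0)) * exp (- a * (t - t0)))
      by (transitivity ((h t - B / a) * (exp (- a * (t - t0)) * exp (a * (t - t0))));
          [ring | rewrite Hinv; ring]).
    apply Rmult_le_compat_r; lra. }
  nra.
Qed.

Lemma exp_decay_lt K a eps : 0 < a -> 0 < eps ->
  exists s0, forall s, s0 <= s -> K * exp (- a * s) < eps.
Proof.
  intros Ha He. exists (Rabs K / (a * eps)). intros s Hs.
  assert (HK : Rabs K <= eps * (a * s)).
  { assert (Rabs K / (a * eps) * (a * eps) = Rabs K) by (field; lra).
    assert (0 <= (s - Rabs K / (a * eps)) * (a * eps)) by (apply Rmult_le_pos; nra).
    nra. }
  pose proof (Rle_abs K). pose proof (exp_ineq1_le (a * s)).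
  pose proof (exp_opp_mul a s) as Hinv. pose proof (exp_pos (- a * s)).
  assert (K * exp (- a * s) <= eps * (a * s) * exp (- a * s)) by (apply Rmult_le_compat_r; lra).
  assert (eps * (a * s) * exp (- a * s) <= eps * (exp (a * s) - 1) * exp (- a * s)).
  { apply Rmult_le_compat_r; [lra | apply Rmult_le_compat_l; lra]. }
  replace (eps * (exp (a * s) - 1) * exp (- a * s))
    with (eps * (exp (- a * s) * exp (a * s)) - eps * exp (- a * s)) in * by ring.
  rewrite Hinv in *.
  nra.
Qed.

(** * Consensus dynamics *)

Section LinearConsensus.
Variables (N : nat) (adj : nat -> nat -> bool) (k T0 : R) (w : R -> nat -> R).
Hypotheses (HN : (0 < N)%nat) (Hsym : forall i j, adj i j = adj j i)
  (Hconn : connected_graph N adj) (Hk : 0 < k)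
  (Hw : forall t i, T0 <= t -> (i < N)%nat ->
     derivable_pt_lim (fun s => w s i) t (k * consensus N adj (w t) i)).

Lemma mean_linear_consensus t : T0 <= t -> mean N (w t) = mean N (w T0).
Proof.
  intros Ht. destruct (Req_dec t T0) as [->|Hne]; [reflexivity|].
  destruct (MVT_cor2 (fun s => mean N (w s)) (fun _ => 0) T0 t) as [s [Hs _]]; [lra| |lra].
  intros s Hs. eapply dpl_eq; [apply derivable_pt_lim_mean; intros i Hi; apply Hw; auto; lra|].
  unfold mean. rewrite rsum_scal, (rsum_consensus N adj Hsym). ring.
Qed.

Let disagreement t := rsum N (fun i => (w t i - mean N (w T0)) * (w t i - mean N (w T0))).

Lemma disagreement_linear_deriv t : T0 <= t ->
  derivable_pt_lim disagreement t (- k * dirichlet N adj (w t) (w t)).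
Proof.
  intros Ht. set (m := mean N (w T0)). eapply dpl_eq.
  - apply (derivable_pt_lim_rsum N (fun s i => (w s i - m) * (w s i - m))); intros i Hi.
    apply dpl_mult; apply dpl_minus; [apply Hw; auto | apply dpl_const | apply Hw; auto | apply dpl_const].
  - transitivity (2 * k * rsum N (fun i => (w t i - m) * consensus N adj (w t) i)).
    + rewrite <- rsum_scal. apply rsum_ext; intros; ring.
    + rewrite (rsum_shift_mul_consensus N adj Hsym). field.
Qed.

Lemma disagreement_linear_dissipation : exists a, 0 < a /\
  forall t, T0 <= t -> - k * dirichlet N adj (w t) (w t) <= - a * disagreement t + 0.
Proof.
  destruct (poincare_dirichlet N adj HN Hconn) as [C [HC HP]].
  exists (k / C). split; [apply Rdiv_lt_0_compat; lra|]. intros t Ht.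
  pose proof (HP (w t)) as Hpt. rewrite mean_linear_consensus in Hpt by exact Ht.
  fold (disagreement t) in Hpt.
  assert (k / C * disagreement t <= k / C * (C * dirichlet N adj (w t) (w t))).
  { apply Rmult_le_compat_l; [left; apply Rdiv_lt_0_compat|]; lra. }
  replace (k / C * (C * dirichlet N adj (w t) (w t))) with (k * dirichlet N adj (w t) (w t)) in *
    by (field; lra).
  lra.
Qed.

Lemma linear_consensus_converges eps : 0 < eps ->
  exists T, forall t i, T <= t -> (i < N)%nat -> Rabs (w t i - mean N (w T0)) < eps.
Proof.
  intros He. destruct disagreement_linear_dissipation as [a [Ha Hdiss]].
  destruct (exp_decay_lt (Rabs (disagreement T0 - 0 / a)) a (eps * eps) Ha ltac:(nra)) as [s0 Hs0].
  exists (T0 + Rabs s0). intros t i Ht Hi. pose proof (Rle_abs s0). pose proof (Rabs_pos s0).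
  pose proof (gronwall_linear disagreement (fun t => - k * dirichlet N adj (w t) (w t)) T0 a 0 Ha
                disagreement_linear_deriv Hdiss t ltac:(lra)) as Hg.
  specialize (Hs0 (t - T0) ltac:(lra)). replace (0 / a) with 0 in * by (field; lra).
  assert (Hterm : (w t i - mean N (w T0)) * (w t i - mean N (w T0)) <= disagreement t).
  { apply (rsum_term_le N (fun i => (w t i - mean N (w T0)) * (w t i - mean N (w T0)))); auto.
    intros; apply Rle_0_sqr. }
  assert (Hsq : Rsqr (w t i - mean N (w T0)) < Rsqr eps) by (unfold Rsqr; lra).
  apply Rsqr_lt_abs_0 in Hsq. now rewrite (Rabs_pos_eq eps) in Hsq by lra.
Qed.
End LinearConsensus.

Section DriftedConsensus.
Variables (N : nat) (adj : nat -> nat -> bool) (k : R) (lam : R -> nat -> R)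
  (g : nat -> R -> R) (c u Lam : nat -> R).
Hypotheses (HN : (0 < N)%nat) (Hsym : forall i j, adj i j = adj j i)
  (Hconn : connected_graph N adj) (Hk : 0 < k)
  (Hg : forall i x, (i < N)%nat -> c i <= g i x <= u i)
  (Hg_right : forall i x, (i < N)%nat -> Lam i <= x -> g i x = c i)
  (Hsol : forall i t, (i < N)%nat -> 0 < t ->
     derivable_pt_lim (fun s => lam s i) t (g i (lam t i) + k * consensus N adj (lam t) i))
  (Hpos : 0 < rsum N c).

Let rate t i := g i (lam t i) + k * consensus N adj (lam t) i.

Lemma mean_drift_pos : 0 < mean N c.
Proof. apply Rmult_lt_0_compat; [apply Rinv_0_lt_compat, lt_0_INR; lia | exact Hpos]. Qed.

Lemma mean_lam_lower t : 1 <= t -> mean N (lam 1) + mean N c * (t - 1) <= mean N (lam t).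
Proof.
  intros Ht. destruct (Req_dec t 1) as [->|Hne]; [lra|].
  destruct (MVT_cor2 (fun s => mean N (lam s)) (fun s => mean N (rate s)) 1 t)
    as [s [Hs Hst]]; [lra| |].
  - intros s Hs. apply derivable_pt_lim_mean; intros i Hi; apply Hsol; auto; lra.
  - assert (mean N c <= mean N (rate s)).
    { unfold mean, rate. rewrite rsum_plus, rsum_scal, (rsum_consensus N adj Hsym), Rmult_0_r, Rplus_0_r.
      apply Rmult_le_compat_l; [left; apply Rinv_0_lt_compat, lt_0_INR; lia|].
      apply rsum_le; intros; apply Hg; auto. }
    cbv beta in Hst. nra.
Qed.

Let disagreement t :=
  rsum N (fun i => (lam t i - mean N (lam t)) * (lam t i - mean N (lam t))).

Lemma disagreement_deriv t : 0 < t -> derivable_pt_lim disagreement t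
  (2 * rsum N (fun i => (lam t i - mean N (lam t)) * g i (lam t i))
   - k * dirichlet N adj (lam t) (lam t)).
Proof.
  intros Ht. eapply dpl_eq.
  - apply (derivable_pt_lim_rsum N (fun s i => (lam s i - mean N (lam s)) * (lam s i - mean N (lam s)))).
    intros i Hi. apply dpl_mult; apply dpl_minus; try (apply Hsol; auto);
      apply derivable_pt_lim_mean; intros j Hj; apply Hsol; auto.
  - set (e := fun i => lam t i - mean N (lam t)).
    transitivity (2 * rsum N (fun i => e i * g i (lam t i))
                  + 2 * k * rsum N (fun i => e i * consensus N adj (lam t) i)
                  - 2 * mean N (rate t) * rsum N e).
    + rewrite <- !rsum_scal, <- rsum_plus, <- rsum_minus. apply rsum_ext; intros.
      unfold e, rate. ring.
    + unfold e. rewrite rsum_sub_mean, rsum_shift_mul_consensus by auto. field.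
Qed.

Lemma disagreement_dissipation : exists a B, 0 < a /\ forall t,
  2 * rsum N (fun i => (lam t i - mean N (lam t)) * g i (lam t i))
  - k * dirichlet N adj (lam t) (lam t) <= - a * disagreement t + B.
Proof.
  destruct (poincare_dirichlet N adj HN Hconn) as [C [HC HP]].
  set (a := k / (2 * C)). assert (Ha : 0 < a) by (apply Rdiv_lt_0_compat; lra).
  set (G := rsum N (fun i => c i * c i + u i * u i)).
  exists a, (/ a * G). split; [exact Ha|]. intros t.
  assert (Hyoung : 2 * rsum N (fun i => (lam t i - mean N (lam t)) * g i (lam t i))
                   <= a * disagreement t + / a * G).
  { unfold disagreement, G. rewrite <- !rsum_scal, <- rsum_plus. apply rsum_le; intros i Hi.
    pose proof (young_ineq a (lam t i - mean N (lam t)) (g i (lam t i)) Ha).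
    assert (g i (lam t i) * g i (lam t i) <= c i * c i + u i * u i) by (apply sqr_le_of_bounds, Hg, Hi).
    assert (0 < / a) by (apply Rinv_0_lt_compat, Ha). nra. }
  assert (Hpoinc : 2 * a * disagreement t <= k * dirichlet N adj (lam t) (lam t)).
  { replace (2 * a) with (k / C) by (unfold a; field; lra).
    replace (k * dirichlet N adj (lam t) (lam t)) with (k / C * (C * dirichlet N adj (lam t) (lam t)))
      by (field; lra).
    apply Rmult_le_compat_l; [left; apply Rdiv_lt_0_compat; lra | apply HP]. }
  lra.
Qed.

Lemma disagreement_bounded : exists K, forall t, 1 <= t -> disagreement t <= K.
Proof.
  destruct disagreement_dissipation as [a [B [Ha Hdiss]]].
  exists (B / a + Rabs (disagreement 1 - B / a)). intros t Ht.
  pose proof (gronwall_linear disagreement _ 1 a B Ha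
                (fun t Ht => disagreement_deriv t ltac:(lra)) (fun t _ => Hdiss t) t Ht).
  assert (exp (- a * (t - 1)) <= 1) by (apply exp_le_1; nra).
  assert (Rabs (disagreement 1 - B / a) * exp (- a * (t - 1)) <= Rabs (disagreement 1 - B / a))
    by (rewrite <- (Rmult_1_r (Rabs _)) at 2; apply Rmult_le_compat_l; [apply Rabs_pos | lra]).
  lra.
Qed.

Lemma lam_eventually_ge M :
  exists T, 1 <= T /\ forall t i, T <= t -> (i < N)%nat -> M <= lam t i.
Proof.
  destruct disagreement_bounded as [K HK]. pose proof mean_drift_pos as HD.
  set (R0 := Rabs K + 1). set (m1 := mean N (lam 1)).
  set (s := Rabs (M + R0 - m1) / mean N c).
  assert (0 <= s) by (apply Rmult_le_pos; [apply Rabs_pos | left; apply Rinv_0_lt_compat, HD]).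
  exists (1 + s). split; [lra|]. intros t i Ht Hi.
  assert (Hdev : mean N (lam t) - R0 <= lam t i).
  { assert ((lam t i - mean N (lam t)) * (lam t i - mean N (lam t)) <= disagreement t).
    { apply (rsum_term_le N (fun i => (lam t i - mean N (lam t)) * (lam t i - mean N (lam t)))); auto.
      intros; apply Rle_0_sqr. }
    pose proof (HK t ltac:(lra)). pose proof (Rle_abs K). pose proof (Rabs_pos K).
    unfold R0 in *. nra. }
  assert (Hgrow : Rabs (M + R0 - m1) <= mean N c * (t - 1)).
  { replace (Rabs (M + R0 - m1)) with (mean N c * s) by (unfold s; field; lra).
    apply Rmult_le_compat_l; lra. }
  pose proof (mean_lam_lower t ltac:(lra)). pose proof (Rle_abs (M + R0 - m1)).
  unfold m1 in *. lra.
Qed.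

Lemma rate_converges eps : 0 < eps -> exists T, forall t l i, T <= t -> (i < N)%nat ->
  derivable_pt_lim (fun s => lam s i) t l -> Rabs (l - mean N c) < eps.
Proof.
  intros He.
  destruct (lam_eventually_ge (rsum N (fun i => Rabs (Lam i)))) as [T0 [HT0 Hlarge]].
  set (w := fun t j => c j + k * consensus N adj (lam t) j).
  assert (Hrate : forall t j, T0 <= t -> (j < N)%nat -> rate t j = w t j).
  { intros t j Ht Hj. unfold rate, w. rewrite Hg_right; auto.
    apply Rle_trans with (Rabs (Lam j)); [apply Rle_abs|].
    apply Rle_trans with (rsum N (fun i => Rabs (Lam i))); [|apply Hlarge; auto].
    apply (rsum_term_le N (fun i => Rabs (Lam i))); auto. intros; apply Rabs_pos. }
  assert (Hw : forall t i, T0 <= t -> (i < N)%nat ->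
            derivable_pt_lim (fun s => w s i) t (k * consensus N adj (w t) i)).
  { intros t i Ht Hi. unfold w at 1. apply dpl_eq with (0 + k * consensus N adj (rate t) i).
    - apply dpl_plus; [apply dpl_const|]. apply dpl_scal, derivable_pt_lim_consensus; auto.
      intros j Hj; apply Hsol; auto; lra.
    - rewrite Rplus_0_l. f_equal. unfold consensus. apply rsum_ext; intros j Hj.
      rewrite !Hrate; auto. }
  assert (Hmean : mean N (w T0) = mean N c).
  { unfold mean, w. rewrite rsum_plus, rsum_scal, (rsum_consensus N adj Hsym). ring. }
  destruct (linear_consensus_converges N adj k T0 w HN Hsym Hconn Hk Hw eps He) as [T HT].
  exists (Rmax T T0). intros t l i Ht Hi Hl.
  pose proof (Rmax_l T T0). pose proof (Rmax_r T T0).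
  rewrite (uniqueness_limite _ t l (rate t i) Hl (Hsol i t Hi ltac:(lra))), Hrate, <- Hmean by (auto; lra).
  apply HT; auto; lra.
Qed.

Lemma drifted_consensus_diverges : 0 < mean N c /\ forall i, (i < N)%nat ->
  (forall M, exists T, forall t, T <= t -> M <= lam t i) /\
  (forall eps, 0 < eps -> exists T, forall t l, T <= t ->
     derivable_pt_lim (fun s => lam s i) t l -> Rabs (l - mean N c) < eps).
Proof.
  split; [exact mean_drift_pos|]. intros i Hi. split.
  - intros M. destruct (lam_eventually_ge M) as [T [_ HT]]. exists T. intros; now apply HT.
  - intros eps He. destruct (rate_converges eps He) as [T HT]. exists T. intros; eapply HT; eauto.
Qed.

End DriftedConsensus.

Lemma drifted_consensus_diverges_down N adj k lam g c u Lam :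
  (0 < N)%nat -> (forall i j, adj i j = adj j i) -> connected_graph N adj -> 0 < k ->
  (forall i x, (i < N)%nat -> c i <= g i x <= u i) ->
  (forall i x, (i < N)%nat -> x <= Lam i -> g i x = u i) ->
  (forall i t, (i < N)%nat -> 0 < t ->
     derivable_pt_lim (fun s => lam s i) t (g i (lam t i) + k * consensus N adj (lam t) i)) ->
  rsum N u < 0 ->
  mean N u < 0 /\ forall i, (i < N)%nat ->
    (forall M, exists T, forall t, T <= t -> lam t i <= M) /\
    (forall eps, 0 < eps -> exists T, forall t l, T <= t ->
       derivable_pt_lim (fun s => lam s i) t l -> Rabs (l - mean N u) < eps).
Proof.
  intros HN Hsym Hconn Hk Hg Hg_left Hsol Hneg.
  assert (Hmean : mean N (fun i => - u i) = - mean N u) by (unfold mean; rewrite rsum_opp; ring).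
  destruct (drifted_consensus_diverges N adj k (fun t i => - lam t i) (fun i x => - g i (- x))
              (fun i => - u i) (fun i => - c i) (fun i => - Lam i)) as [Hpos Hlim]; auto.
  - intros i x Hi. pose proof (Hg i (- x) Hi). lra.
  - intros i x Hi Hx. cbv beta. rewrite Hg_left; auto; lra.
  - intros i t Hi Ht. cbv beta. rewrite consensus_opp, Ropp_involutive.
    apply dpl_eq with (- (g i (lam t i) + k * consensus N adj (lam t) i)); [|ring].
    apply (dpl_opp (fun s => lam s i)), Hsol; auto.
  - rewrite rsum_opp. lra.
  - rewrite Hmean in Hpos, Hlim. split; [lra|]. intros i Hi.
    destruct (Hlim i Hi) as [Hdiv Hrate]. split.
    + intros M. destruct (Hdiv (- M)) as [T HT]. exists T. intros t Ht.
      pose proof (HT t Ht). lra.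
    + intros eps He. destruct (Hrate eps He) as [T HT]. exists T. intros t l Ht Hl.
      pose proof (HT t (- l) Ht (dpl_opp (fun s => lam s i) t l Hl)) as Hlt.
      now replace (- l - - mean N u) with (- (l - mean N u)) in Hlt by ring; rewrite Rabs_Ropp in Hlt.
Qed.

(** * The response map xhat *)

Lemma vfun_continuous_pt (df dphi : R -> R) x :
  continuity df -> continuity dphi -> dphi x < 1 -> continuity_pt (vfun df dphi) x.
Proof.
  intros Hdf Hdphi Hx. apply (continuity_pt_div df (fun y => 1 - dphi y)); [apply Hdf| |lra].
  apply (continuity_pt_minus (fun _ => 1) dphi); [apply continuity_pt_const; intros ? ?; reflexivity | apply Hdphi].
Qed.

Lemma xhat_range (v : R -> R) lo hi lam : lo <= hi ->
  (forall x, lo <= x <= hi -> continuity_pt v x) -> lo <= xhat v lo hi lam <= hi.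
Proof.
  intros Hlh Hv. unfold xhat.
  destruct (Rle_dec lam (v lo)) as [|Hlo]; [lra|].
  destruct (Rle_dec (v hi) lam) as [|Hhi]; [lra|].
  apply Rnot_le_lt in Hlo, Hhi.
  assert (Hex : exists x, lo < x < hi /\ v x = lam).
  { destruct (Ranalysis5.IVT_interv (fun x => v x - lam) lo hi) as [z [Hz Hvz]].
    - intros a Ha. apply continuity_pt_minus; [now apply Hv | apply continuity_pt_const; intros ? ?; reflexivity].
    - destruct Hlh as [|E]; [assumption | subst; lra].
    - lra.
    - lra.
    - exists z. assert (v z = lam) by lra.
      assert (z <> lo) by (intros ->; lra). assert (z <> hi) by (intros ->; lra).
      split; [lra | assumption]. }
  unfold vinv. destruct (epsilon_spec (inhabits lo) (fun x => lo < x < hi /\ v x = lam) Hex). lra.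
Qed.

Lemma xhat_above (v : R -> R) lo hi lam : Rmax (v lo) (v hi) < lam -> xhat v lo hi lam = hi.
Proof.
  intros H. pose proof (Rmax_l (v lo) (v hi)). pose proof (Rmax_r (v lo) (v hi)). unfold xhat.
  destruct (Rle_dec lam (v lo)); [lra|]. destruct (Rle_dec (v hi) lam); [reflexivity | lra].
Qed.

Lemma xhat_below (v : R -> R) lo hi lam : lam <= v lo -> xhat v lo hi lam = lo.
Proof. intros H. unfold xhat. now destruct (Rle_dec lam (v lo)). Qed.

Lemma id_minus_phi_nondecreasing (phi dphi : R -> R) lo hi x y :
  (forall z, derivable_pt_lim phi z (dphi z)) -> (forall z, lo <= z <= hi -> dphi z < 1) ->
  lo <= x -> x <= y -> y <= hi -> x - phi x <= y - phi y.
Proof.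
  intros Hd H1 Hx Hxy Hy. destruct (Req_dec x y) as [->|Hne]; [lra|].
  destruct (MVT_cor2 phi dphi x y) as [z [Hz Hzr]]; [lra | intros; apply Hd |].
  pose proof (H1 z ltac:(lra)). nra.
Qed.

Theorem theorem4
  (N : nat) (d lo hi : nat -> R) (f phi df dphi : nat -> R -> R)
  (adj : nat -> nat -> bool) (k : R) (lam : R -> nat -> R)
  (HN : (0 < N)%nat)
  (Hint : forall i, (i < N)%nat -> lo i <= hi i)
  (* Assumption 1 *)
  (Hdf : forall i x, (i < N)%nat -> derivable_pt_lim (f i) x (df i x))
  (Hdfc : forall i, (i < N)%nat -> continuity (df i))
  (Hdphi : forall i x, (i < N)%nat -> derivable_pt_lim (phi i) x (dphi i x))
  (Hdphic : forall i, (i < N)%nat -> continuity (dphi i))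
  (Hfconv : forall i, (i < N)%nat -> strictly_convex_on (f i) (lo i) (hi i))
  (Hphiconv : forall i, (i < N)%nat -> convex_on (phi i) (lo i) (hi i))
  (Hdphi1 : forall i x, (i < N)%nat -> lo i <= x <= hi i -> dphi i x < 1)
  (* Assumption 2 *)
  (Hdfpos : forall i x, (i < N)%nat -> lo i <= x <= hi i -> 0 < df i x)
  (* Assumption 3 *)
  (Hsym : forall i j, adj i j = adj j i)
  (Hconn : connected_graph N adj)
  (Hk : 0 < k)
  (* lam solves the dynamics for t > 0 (arbitrary initial condition) *)
  (Hsol : forall i t, (i < N)%nat -> 0 < t ->
     derivable_pt_lim (fun s => lam s i) t
       (rhs N adj k d lo hi phi df dphi (lam t) i)) :
  (0 < rsum N (fun i => d i - hi i + phi i (hi i)) ->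
   let D0 := / INR N * rsum N (fun i => d i - hi i + phi i (hi i)) in
   0 < D0 /\
   forall i, (i < N)%nat ->
     (forall M, exists T, forall t, T <= t -> M <= lam t i) /\
     (forall eps, 0 < eps -> exists T, forall t l, T <= t ->
        derivable_pt_lim (fun s => lam s i) t l -> Rabs (l - D0) < eps))
  /\
  (rsum N (fun i => d i - lo i + phi i (lo i)) < 0 ->
   let D1 := / INR N * rsum N (fun i => d i - lo i + phi i (lo i)) in
   D1 < 0 /\
   forall i, (i < N)%nat ->
     (forall M, exists T, forall t, T <= t -> lam t i <= M) /\
     (forall eps, 0 < eps -> exists T, forall t l, T <= t ->
        derivable_pt_lim (fun s => lam s i) t l -> Rabs (l - D1) < eps)).
Proof.
  set (v i := vfun (df i) (dphi i)).
  set (g i x := d i - xhat (v i) (lo i) (hi i) x + phi i (xhat (v i) (lo i) (hi i) x)).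
  set (c i := d i - hi i + phi i (hi i)).
  set (u i := d i - lo i + phi i (lo i)).
  assert (Hg : forall i x, (i < N)%nat -> c i <= g i x <= u i).
  { intros i x Hi. set (xi := xhat (v i) (lo i) (hi i) x).
    assert (Hxi : lo i <= xi <= hi i).
    { apply xhat_range; [now apply Hint|]. intros y Hy.
      apply vfun_continuous_pt; [apply Hdfc | apply Hdphic | apply Hdphi1]; auto. }
    pose proof (fun y z => id_minus_phi_nondecreasing (phi i) (dphi i) (lo i) (hi i) y z
                  (fun w => Hdphi i w Hi) (fun w => Hdphi1 i w Hi)) as Hmono.
    pose proof (Hmono xi (hi i)). pose proof (Hmono (lo i) xi). unfold c, g, u. fold xi. lra. }
  split.
  - intros Hpos. apply (drifted_consensus_diverges N adj k lam g c u
                          (fun i => Rmax (v i (lo i)) (v i (hi i)) + 1)); auto.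
    intros i x Hi Hx. unfold g, c. now rewrite xhat_above by lra.
  - intros Hneg. apply (drifted_consensus_diverges_down N adj k lam g c u (fun i => v i (lo i))); auto.
    intros i x Hi Hx. unfold g, u. now rewrite xhat_below.
Qed.
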